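(* Let $n$ be a positive integer and let $F=O\times\{0,n\}\subset\mathbb{Z}^3$ be the filler, where $O=\{-1,0,1\}^2\setminus\{(0,0)\}$. If $E\subset\mathbb{Z}^3$ contains some translate of $\{-1,0,1\}^2\times\{0\}$ as a subset, then $F$ does not tile $E$, i.e. there is no $W\subset\mathbb{Z}^3$ with $W\oplus F$ non-overlapping and $W\oplus F=E$.
   Context: $A\oplus B=\{a+b: a\in A, b\in B\}$; it is non-overlapping if each element arises from a unique pair $(a,b)$. *)

From Stdlib Require Import ZArith.
Open Scope Z_scope.

Definition pt := (Z * Z * Z)%type.

Definition padd (a b : pt) : pt :=
  match a, b with (a1, a2, a3), (b1, b2, b3) => (a1 + b1, a2 + b2, a3 + b3) end.

Definition inO (x y : Z) : Prop :=
  -1 <= x <= 1 /\ -1 <= y <= 1 /\ ~ (x = 0 /\ y = 0).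

Definition filler (n : Z) (p : pt) : Prop :=
  match p with (x, y, z) => inO x y /\ (z = 0 \/ z = n) end.

Definition square (p : pt) : Prop :=
  match p with (x, y, z) => -1 <= x <= 1 /\ -1 <= y <= 1 /\ z = 0 end.

Definition sumset (A B : pt -> Prop) (p : pt) : Prop :=
  exists a b, A a /\ B b /\ p = padd a b.

Definition non_overlapping (A B : pt -> Prop) : Prop :=
  forall a a' b b', A a -> A a' -> B b -> B b' ->
    padd a b = padd a' b' -> a = a' /\ b = b'.

Definition contains_translate (E S : pt -> Prop) : Prop :=
  exists t, forall s, S s -> E (padd t s).

(* A copy w + F of the filler leaves its "hole" w + (0,0,c) uncovered, and no other copy can
   cover it: any copy containing the hole overlaps w + F, because O meets each of its own
   translates by a vector of O.  If E contains a full square t + {-1,0,1}^2 x {0}, the copy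
   covering the centre t has its hole in that square, hence in E, which is impossible. *)
From Stdlib Require Import ZArith Lia.
Open Scope Z_scope.

Lemma inO_meets_translate (a b : Z) :
  inO a b -> exists u1 u2, inO u1 u2 /\ inO (u1 + a) (u2 + b).
Proof.
  unfold inO; intros Hab.
  destruct (Z.eq_dec a 0) as [Ha | Ha].
  - exists 1, (- b); lia.
  - destruct (Z.eq_dec b 0) as [Hb | Hb].
    + exists (- a), 1; lia.
    + exists (- a), 0; lia.
Qed.

Lemma square_opp_inO (a b : Z) : inO a b -> square (- a, - b, 0).
Proof. unfold inO; simpl; lia. Qed.

Lemma filler_hole_uncovered (n : Z) (W : pt -> Prop) (w : pt) (c : Z) :
  non_overlapping W (filler n) -> W w -> c = 0 \/ c = n ->
  ~ sumset W (filler n) (padd w (0, 0, c)).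
Proof.
  destruct w as [[w1 w2] w3]; intros HN Hw Hc [[[v1 v2] v3] [[[a b] c'] [Hv [[Hab Hc'] Hwv]]]].
  simpl in Hwv; injection Hwv as e1 e2 e3.
  destruct (inO_meets_translate a b Hab) as (u1 & u2 & Hu & Hua).
  assert (Hsame : padd (w1, w2, w3) (u1, u2, c) = padd (v1, v2, v3) (u1 + a, u2 + b, c')).
  { simpl; f_equal; [f_equal |]; lia. }
  destruct (HN _ _ (u1, u2, c) (u1 + a, u2 + b, c') Hw Hv (conj Hu Hc) (conj Hua Hc') Hsame)
    as [Hwv _].
  injection Hwv as g1 g2 g3.
  unfold inO in Hab; lia.
Qed.

Theorem lemma4p2 (n : Z) (E : pt -> Prop) :
  0 < n ->
  contains_translate E square ->
  ~ (exists W : pt -> Prop,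
       non_overlapping W (filler n) /\
       (forall p, sumset W (filler n) p <-> E p)).
Proof.
  intros _ [t Ht] [W [HN HE]].
  assert (Hcentre : E t).
  { destruct t as [[t1 t2] t3].
    specialize (Ht (0, 0, 0)); simpl in Ht; rewrite !Z.add_0_r in Ht.
    apply Ht; lia. }
  apply HE in Hcentre as (w & [[a b] c] & Hw & [Hab Hc] & Ht_eq).
  apply (filler_hole_uncovered n W w c HN Hw Hc), HE.
  replace (padd w (0, 0, c)) with (padd t (- a, - b, 0)).
  - exact (Ht _ (square_opp_inO a b Hab)).
  - subst t; destruct w as [[w1 w2] w3]; simpl; f_equal; [f_equal |]; lia.
Qed.
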